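(* Let $R,S$ be commutative rings with nonzero identity, $\delta$ an expansion of ideals of $R$, $\gamma$ an expansion of ideals of $S$, and $f:R\to S$ a $\delta\gamma$-homomorphism. Then: (1) If $f$ is a monomorphism and $J$ is a $\gamma$-$n$-ideal of $S$, then $f^{-1}(J)$ is a $\delta$-$n$-ideal of $R$. (2) If $f$ is an epimorphism and $I$ is a proper ideal of $R$ with $\ker(f)\subseteq I$ which is a $\delta$-$n$-ideal of $R$, then $f(I)$ is a $\gamma$-$n$-ideal of $S$.
   Context: An expansion of ideals of a ring $R$ is a map $\delta$ from the set of ideals of $R$ to itself such that $I\subseteq\delta(I)$ for every ideal $I$, and $\delta(I)\subseteq\delta(J)$ whenever $I\subseteq J$. $\sqrt{0}$ denotes the nilradical of the ring in question. Given an expansion $\delta$ of ideals of a ring $R$, a proper ideal $I$ of $R$ is a $\delta$-$n$-ideal if whenever $a,b\in R$ with $ab\in I$ and $a\notin\sqrt{0_R}$, then $b\in\delta(I)$. A ring homomorphism $f:R\to S$ is a $\delta\gamma$-homomorphism if $\delta(f^{-1}(J))=f^{-1}(\gamma(J))$ for every ideal $J$ of $S$. *)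

From mathcomp Require Import all_boot all_algebra.
Set Implicit Arguments. Unset Strict Implicit. Unset Printing Implicit Defensive.
Import GRing.Theory.
Local Open Scope ring_scope.

Definition subset_of (T : Type) (A B : T -> Prop) := forall x, A x -> B x.

Definition is_ideal_of (R : comNzRingType) (I : R -> Prop) : Prop :=
  [/\ I 0, (forall x y, I x -> I y -> I (x + y)) & (forall a x, I x -> I (a * x))].

Definition proper_ideal_of (R : comNzRingType) (I : R -> Prop) : Prop :=
  is_ideal_of I /\ ~ I 1.

Definition in_nilrad (R : comNzRingType) (a : R) : Prop := exists n : nat, a ^+ n = 0.

Definition expansion (R : comNzRingType) (delta : (R -> Prop) -> (R -> Prop)) : Prop :=
  (forall I, is_ideal_of I -> is_ideal_of (delta I)) /\
  (forall I, is_ideal_of I -> subset_of I (delta I)) /\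
  (forall I J, is_ideal_of I -> is_ideal_of J -> subset_of I J -> subset_of (delta I) (delta J)).

Definition delta_n_ideal (R : comNzRingType) (delta : (R -> Prop) -> (R -> Prop))
  (I : R -> Prop) : Prop :=
  proper_ideal_of I /\
  (forall a b : R, I (a * b) -> ~ in_nilrad a -> delta I b).

Definition preimg (R S : Type) (f : R -> S) (J : S -> Prop) : R -> Prop := fun x => J (f x).
Definition imgf (R S : Type) (f : R -> S) (I : R -> Prop) : S -> Prop :=
  fun y => exists2 x, I x & f x = y.

Definition dg_hom (R S : comNzRingType) (delta : (R -> Prop) -> (R -> Prop))
  (gamma : (S -> Prop) -> (S -> Prop)) (f : {rmorphism R -> S}) : Prop :=
  forall J : S -> Prop, is_ideal_of J ->
    forall x, delta (preimg f J) x <-> preimg f (gamma J) x.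

From mathcomp Require Import all_boot all_algebra.
Set Implicit Arguments. Unset Strict Implicit.
Import GRing.Theory.
Local Open Scope ring_scope.

(* Since [delta (f^-1 J) = f^-1 (gamma J)], the n-ideal condition transfers along
   [f] once the nilradical does: an injective [f] reflects nilpotence, and every
   [f] preserves it.  For the image, [ker f <= I] gives [f^-1 (f I) = I], so the
   expansion [delta I] sits inside [delta (f^-1 (f I)) = f^-1 (gamma (f I))].
   Neither part needs [gamma] to be an expansion. *)

Section IdealsAlongRmorphism.

Variables (R S : comNzRingType) (f : {rmorphism R -> S}).

Lemma preimg_ideal (J : S -> Prop) : is_ideal_of J -> is_ideal_of (preimg f J).
Proof.
case=> J0 JD JM; split; rewrite /preimg.
- by rewrite rmorph0.
- by move=> x y Jx Jy; rewrite rmorphD; apply: JD.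
- by move=> a x Jx; rewrite rmorphM; apply: JM.
Qed.

Lemma preimg_proper_ideal (J : S -> Prop) :
  proper_ideal_of J -> proper_ideal_of (preimg f J).
Proof. by case=> J_ideal J1; split; [exact: preimg_ideal | rewrite /preimg rmorph1]. Qed.

Lemma in_nilrad_rmorph (a : R) : in_nilrad a -> in_nilrad (f a).
Proof. by case=> n an0; exists n; rewrite -rmorphXn an0 rmorph0. Qed.

Lemma in_nilrad_inj (a : R) : injective f -> in_nilrad (f a) -> in_nilrad a.
Proof. by move=> f_inj [n fan0]; exists n; apply: f_inj; rewrite rmorphXn fan0 rmorph0. Qed.

Lemma imgf_ideal (I : R -> Prop) :
  (forall y, exists x, f x = y) -> is_ideal_of I -> is_ideal_of (imgf f I).
Proof.
move=> f_surj [I0 ID IM]; split.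
- by exists 0; [exact: I0 | rewrite rmorph0].
- by move=> _ _ [u Iu <-] [v Iv <-]; exists (u + v); [apply: ID | rewrite rmorphD].
- move=> a _ [u Iu <-]; have [r <-] := f_surj a.
  by exists (r * u); [apply: IM | rewrite rmorphM].
Qed.

Lemma preimg_imgf_sub (I : R -> Prop) :
  is_ideal_of I -> (forall x, f x = 0 -> I x) -> subset_of (preimg f (imgf f I)) I.
Proof.
case=> _ ID _ kerI x [y Iy fyx].
have -> : x = (x - y) + y by rewrite subrK.
by apply: ID => //; apply: kerI; rewrite rmorphB fyx subrr.
Qed.

Lemma sub_preimg_imgf (I : R -> Prop) : subset_of I (preimg f (imgf f I)).
Proof. by move=> x Ix; exists x. Qed.

Lemma imgf_proper_ideal (I : R -> Prop) :
  (forall y, exists x, f x = y) -> (forall x, f x = 0 -> I x) ->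
  proper_ideal_of I -> proper_ideal_of (imgf f I).
Proof.
move=> f_surj kerI [I_ideal I1]; split; first exact: imgf_ideal.
move=> If1; apply/I1/(preimg_imgf_sub I_ideal kerI).
by rewrite /preimg rmorph1.
Qed.

Variables (delta : (R -> Prop) -> (R -> Prop)) (gamma : (S -> Prop) -> (S -> Prop)).
Hypothesis f_dg : dg_hom delta gamma f.

Lemma preimg_delta_n_ideal (J : S -> Prop) :
  injective f -> delta_n_ideal gamma J -> delta_n_ideal delta (preimg f J).
Proof.
move=> f_inj [J_proper Jn]; split; first exact: preimg_proper_ideal.
move=> a b Jab a_nnil; apply/(f_dg J_proper.1).
apply: (Jn (f a) (f b)); first by rewrite -rmorphM.
by move/(in_nilrad_inj f_inj).
Qed.

Lemma imgf_delta_n_ideal (I : R -> Prop) :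
  expansion delta -> (forall y, exists x, f x = y) -> (forall x, f x = 0 -> I x) ->
  delta_n_ideal delta I -> delta_n_ideal gamma (imgf f I).
Proof.
move=> [_ [_ delta_mono]] f_surj kerI [I_proper In].
have fI_ideal := imgf_ideal f_surj I_proper.1.
split; first exact: imgf_proper_ideal.
move=> a b [x Ix fx_ab] fa_nnil.
have [r fr] := f_surj a; have [s fs] := f_surj b; subst a b.
have Irs : I (r * s).
  by apply: (preimg_imgf_sub I_proper.1 kerI); exists x; rewrite // rmorphM.
have r_nnil : ~ in_nilrad r by move/in_nilrad_rmorph.
have := delta_mono _ _ I_proper.1 (preimg_ideal fI_ideal) (@sub_preimg_imgf I).
by move=> /(_ s (In r s Irs r_nnil)) /(f_dg fI_ideal).
Qed.

End IdealsAlongRmorphism.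

Theorem proposition2p20 (R S : comNzRingType)
  (delta : (R -> Prop) -> (R -> Prop)) (gamma : (S -> Prop) -> (S -> Prop))
  (f : {rmorphism R -> S}) :
  expansion delta -> expansion gamma -> dg_hom delta gamma f ->
  (injective f ->
     forall J : S -> Prop, delta_n_ideal gamma J -> delta_n_ideal delta (preimg f J))
  /\
  ((forall y : S, exists x : R, f x = y) ->
     forall I : R -> Prop, proper_ideal_of I -> (forall x, f x = 0 -> I x) ->
       delta_n_ideal delta I -> delta_n_ideal gamma (imgf f I)).
Proof.
move=> delta_exp _ f_dg; split.
- by move=> f_inj J; apply: preimg_delta_n_ideal.
- by move=> f_surj I _ kerI; apply: imgf_delta_n_ideal.
Qed.
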